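(* Let $m\ge 2$ be an integer and let $n$ be a positive integer with $m^j\le n<m^{j+1}$ for some integer $j\ge 0$, with base $m$ representation $n=\alpha_j m^j+\cdots+\alpha_1 m+\alpha_0$ ($\alpha_j>0$, $0\le\alpha_i\le m-1$). For an $m$-ary partition $\lambda=(\lambda_\ell,\ldots,\lambda_0)$ of $n$ (so $n=\sum_{i=0}^\ell \lambda_i m^i$, $\lambda_\ell>0$, $\lambda_i\ge 0$), setting $\lambda_k=0$ for $\ell<k\le j$, define $\varphi(\lambda)=(\beta_j,\beta_{j-1},\ldots,\beta_1)$ by \[ \beta_i=\sum_{k=i}^{j}m^{k-i}(\alpha_k-\lambda_k),\qquad 1\le i\le j. \] Then $\varphi$ is a bijection from the set $\mathcal{B}_m(n)$ of $m$-ary partitions of $n$ onto the set \[ \mathcal{S}_m(n)=\{(\beta_j,\ldots,\beta_1)\in\mathbb{Z}^j:\,0\le\beta_j\le\alpha_j\text{ and }0\le\beta_t\le\alpha_t+m\beta_{t+1}\text{ for }1\le t\le j-1\}. \]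
   Context: An $m$-ary partition of $n$ is a partition of $n$ into powers of $m$, encoded as the sequence $(\lambda_\ell,\ldots,\lambda_0)$ of multiplicities, where $\lambda_i$ is the number of parts equal to $m^i$, $\lambda_\ell>0$ and $\lambda_i\ge0$; necessarily $\ell\le j$. $\mathcal{B}_m(n)$ is the set of all such partitions. *)

From mathcomp Require Import all_boot all_order all_algebra.
Set Implicit Arguments. Unset Strict Implicit. Unset Printing Implicit Defensive.
Import Order.TTheory GRing.Theory Num.Theory.

Definition digit (m n k : nat) : nat := (n %/ m ^ k) %% m.

(* An m-ary partition of n, encoded LITTLE-ENDIAN as the sequence of
   multiplicities lam = [:: lam_0; lam_1; ...; lam_l] (lam_i = number of parts
   equal to m^i), with lam_l > 0.  Beyond index l, nth 0 lam k = 0. *)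
Definition is_mary_partition (m n : nat) (lam : seq nat) : bool :=
  [&& lam != [::], 0 < last 0 lam &
      \sum_(i < size lam) nth 0 lam i * m ^ i == n].

Definition beta (m n j : nat) (lam : seq nat) (i : nat) : int :=
  (\sum_(i <= k < j.+1)
     ((m ^ (k - i))%:Z * ((digit m n k)%:Z - (nth 0 lam k)%:Z)))%R.

(* phi(lam) = (beta_1, ..., beta_j), stored LITTLE-ENDIAN: entry t-1 is beta_t. *)
Definition phi (m n j : nat) (lam : seq nat) : seq int :=
  [seq beta m n j lam t | t <- iota 1 j].

Definition in_S (m n j : nat) (b : seq int) : bool :=
  let bt t := nth 0%R b t.-1 in
  [&& size b == j,
      (0 < j) ==> ((0 <= bt j)%R && (bt j <= (digit m n j)%:Z)%R) &
      all (fun t => (0 <= bt t)%R && (bt t <= (digit m n t)%:Z + (m%:Z) * bt t.+1)%R)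
          (iota 1 j.-1)].

From mathcomp Require Import all_boot all_order all_algebra.
From mathcomp Require Import zify ring.
Import GRing.Theory Num.Theory.

(* Splitting off the first term of beta_i gives the recurrence
   beta_i = alpha_i - lam_i + m beta_(i+1), with beta_(j+1) = 0, and summing it
   gives beta_0 = n - sum_k lam_k m^k.  Hence lam is an m-ary partition of n
   exactly when its betas solve this recurrence with beta_0 = 0, and lam is
   recovered as lam_i = alpha_i + m beta_(i+1) - beta_i.  The constraints
   defining S_m(n) say precisely that these lam_i are nonnegative, while
   beta_i >= 0 follows upwards from beta_0 = 0 because alpha_i < m. *)

Lemma digit_expansion m n i : \sum_(k < i) digit m n k * m ^ k = n %% m ^ i.
Proof.
elim: i => [|i IH]; first by rewrite big_ord0 expn0 modn1.
rewrite big_ord_recr /= IH /digit modn_divl -expnS addnC.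
by rewrite [RHS](divn_eq _ (m ^ i)) (modn_dvdm _ (dvdn_exp2l m (leqnSn i))).
Qed.

Lemma sum_nth_expn_widen (s : seq nat) m N : size s <= N ->
  \sum_(i < size s) nth 0 s i * m ^ i = \sum_(i < N) nth 0 s i * m ^ i.
Proof.
move=> le_sN; rewrite (big_ord_widen _ (fun i => nth 0 s i * m ^ i) le_sN).
by rewrite big_mkcond; apply: eq_bigr => i _; case: ltnP => // ?; rewrite nth_default.
Qed.

Lemma eq_from_nth_last (R : nzSemiRingType) (s1 s2 : seq R) :
  last 0%R s1 != 0%R -> last 0%R s2 != 0%R -> nth 0%R s1 =1 nth 0%R s2 -> s1 = s2.
Proof.
move=> s1_last s2_last eq_s.
(* A sequence with a nonzero last entry is the coefficient list of a polynomial. *)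
rewrite -(PolyK s1_last) -(PolyK s2_last); congr polyseq.
by apply/polyP => i; rewrite !coef_Poly.
Qed.

Section Beta.

Variables m n j : nat.

Local Open Scope ring_scope.

Lemma beta_default (lam : seq nat) i : (j < i)%N -> beta m n j lam i = 0.
Proof. by move=> lt_ji; rewrite /beta big_geq. Qed.

Lemma betaS (lam : seq nat) i : (i <= j)%N ->
  beta m n j lam i = (digit m n i)%:Z - (nth 0%N lam i)%:Z + m%:Z * beta m n j lam i.+1.
Proof.
move=> le_ij; rewrite /beta big_ltn ?ltnS // subnn expn0 mul1r mulr_sumr.
congr (_ + _); apply: eq_big_nat => k /andP [lt_ik _].
by rewrite mulrA -PoszM -expnS subnSK.
Qed.

Lemma beta_unique (lam : seq nat) (B : nat -> int) : B j.+1 = 0 ->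
    (forall i, (i <= j)%N ->
       B i = (digit m n i)%:Z - (nth 0%N lam i)%:Z + m%:Z * B i.+1) ->
  forall i, (i <= j.+1)%N -> beta m n j lam i = B i.
Proof.
move=> B_top B_rec i le_ij; rewrite -(subKn le_ij).
elim: (j.+1 - i)%N (leq_subr i j.+1) => [|k IH] le_kj.
  by rewrite subn0 B_top beta_default.
have le_j : (j.+1 - k.+1 <= j)%N by rewrite subSS leq_subr.
by rewrite betaS // B_rec // subnSK // IH // ltnW.
Qed.

Lemma nth_cons0_phi (lam : seq nat) t : beta m n j lam 0 = 0 ->
  nth 0 (0 :: phi m n j lam) t = beta m n j lam t.
Proof.
move=> beta0_eq0; case: t => [//|t] /=.
have [lt_tj | le_jt] := ltnP t j.
  by rewrite (nth_map 0%N) ?size_iota // nth_iota // add1n.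
by rewrite nth_default ?size_map ?size_iota // beta_default.
Qed.

(* [nth 0 (0 :: b) t] reads [b] as beta_0 = 0, beta_1, ..., beta_j, then 0. *)
Lemma in_S_iff b : in_S m n j b <->
  size b = j /\ forall t, (t <= j)%N ->
    0 <= nth 0 (0 :: b) t <= (digit m n t)%:Z + m%:Z * nth 0 (0 :: b) t.+1.
Proof.
have nth_cons0 t : (0 < t)%N -> nth 0 (0 :: b) t = nth 0 b t.-1 by case: t.
split=> [/and3P [/eqP size_b top /allP mid] | [size_b bounds]]; last first.
  apply/and3P; split; first by rewrite size_b.
    apply/implyP => j_gt0; have := bounds j (leqnn j).
    by rewrite nth_cons0 //= [nth _ b j]nth_default ?size_b // mulr0 addr0.
  apply/allP => t; rewrite mem_iota => /andP [t_gt0 lt_tj].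
  have le_tj : (t <= j)%N by lia.
  by have := bounds t le_tj; rewrite !nth_cons0.
have pos_bounds t : (0 < t <= j)%N ->
    0 <= nth 0 (0 :: b) t <= (digit m n t)%:Z + m%:Z * nth 0 (0 :: b) t.+1.
  case/andP=> t_gt0 le_tj; rewrite !nth_cons0 //=.
  have [lt_tj | ge_tj] := ltnP t j; first by apply: mid; rewrite mem_iota; lia.
  have eq_tj : t = j by apply/eqP; rewrite eqn_leq le_tj.
  rewrite eq_tj in t_gt0 *.
  by rewrite [nth _ b j]nth_default ?size_b // mulr0 addr0 (implyP top).
split=> // -[_ | t le_tj]; last exact: pos_bounds t.+1 le_tj.
have [j0 | j_gt0] := posnP j; first by rewrite /= nth_default ?size_b ?j0 // mulr0 addr0.
by have /andP [b1_ge0 _] := pos_bounds 1 j_gt0; rewrite /= addr_ge0 ?mulr_ge0.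
Qed.

Hypothesis m_gt1 : (1 < m)%N.

Lemma beta_ge0 (lam : seq nat) i : beta m n j lam 0 = 0 -> 0 <= beta m n j lam i.
Proof.
move=> beta0_eq0; elim: i => [|i IH]; first by rewrite beta0_eq0.
have [le_ij | lt_ji] := leqP i j; last by rewrite beta_default // ltnS ltnW.
have digit_lt : (digit m n i < m)%N by rewrite ltn_pmod // ltnW.
move: IH; rewrite betaS //; nia.
Qed.

Hypothesis lt_n_mj : (n < m ^ j.+1)%N.

Lemma beta0 (lam : seq nat) :
  beta m n j lam 0 = n%:Z - (\sum_(k < j.+1) nth 0%N lam k * m ^ k)%N%:Z.
Proof.
rewrite /beta big_mkord.
under eq_bigr do rewrite subn0 mulrBr -!PoszM mulnC [(m ^ _ * _)%N]mulnC -!natz.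
by rewrite sumrB -!natr_sum !natz digit_expansion modn_small.
Qed.

Lemma size_mary_partition (lam : seq nat) :
  is_mary_partition m n lam -> (size lam <= j.+1)%N.
Proof.
case/and3P=> lam_neq_nil last_gt0 /eqP sum_lam.
have lt_last : ((size lam).-1 < size lam)%N by rewrite ltn_predL lt0n size_eq0.
have : (m ^ (size lam).-1 <= n)%N.
  rewrite -sum_lam (bigD1 (Ordinal lt_last)) //= nth_last.
  exact: leq_trans (leq_pmull _ last_gt0) (leq_addr _ _).
move/leq_ltn_trans/(_ lt_n_mj); rewrite ltn_exp2l //; lia.
Qed.

Lemma beta0_mary_partition (lam : seq nat) :
  is_mary_partition m n lam -> beta m n j lam 0 = 0.
Proof.
move=> lamP; rewrite beta0 -sum_nth_expn_widen ?size_mary_partition //.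
by case/and3P: lamP => _ _ /eqP ->; rewrite subrr.
Qed.

Lemma phi_in_S (lam : seq nat) :
  is_mary_partition m n lam -> in_S m n j (phi m n j lam).
Proof.
move=> lamP; have beta0_eq0 := beta0_mary_partition _ lamP.
apply/in_S_iff; split=> [|t le_tj]; first by rewrite size_map size_iota.
rewrite !nth_cons0_phi // beta_ge0 //= [X in X <= _]betaS //; lia.
Qed.

Lemma phi_inj (lam1 lam2 : seq nat) :
  is_mary_partition m n lam1 -> is_mary_partition m n lam2 ->
  phi m n j lam1 = phi m n j lam2 -> lam1 = lam2.
Proof.
move=> lam1P lam2P eq_phi.
have eq_beta12 t : beta m n j lam1 t = beta m n j lam2 t.
  rewrite -(nth_cons0_phi lam1 t (beta0_mary_partition _ lam1P)).
  by rewrite -(nth_cons0_phi lam2 t (beta0_mary_partition _ lam2P)) eq_phi.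
have last_neq0 lam : is_mary_partition m n lam -> last 0%N lam != 0%N.
  by case/and3P=> _ /lt0n_neq0.
apply: eq_from_nth_last (last_neq0 _ lam1P) (last_neq0 _ lam2P) _ => i.
have [le_ij | lt_ji] := leqP i j.
  have := betaS lam2 _ le_ij; rewrite -!eq_beta12 (betaS lam1 _ le_ij).
  by move=> /addIr/addrI/oppr_inj [].
by rewrite !nth_default ?(leq_trans (size_mary_partition _ _) lt_ji).
Qed.

Hypothesis n_gt0 : (0 < n)%N.

Lemma phi_onto b : in_S m n j b ->
  exists2 lam, is_mary_partition m n lam & phi m n j lam = b.
Proof.
case/in_S_iff => size_b b_bounds; pose B t := nth 0 (0 :: b) t.
pose c i : int := (digit m n i)%:Z + m%:Z * B i.+1 - B i.
(* Poly strips the trailing zero multiplicities. *)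
pose p : {poly nat} := Poly (mkseq (fun i => absz (c i)) j.+1).
have size_p : (size p <= j.+1)%N by rewrite (leq_trans (size_Poly _)) ?size_mkseq.
have p_coef i : (i <= j)%N -> (nth 0%N p i)%:Z = c i.
  move=> le_ij; rewrite coef_Poly nth_mkseq // gez0_abs // subr_ge0.
  by case/andP: (b_bounds i le_ij).
have beta_p i : (i <= j.+1)%N -> beta m n j p i = B i.
  apply: beta_unique => [|k le_kj]; first by rewrite /B /= nth_default ?size_b.
  by rewrite p_coef // /c; ring.
have sum_p : (\sum_(k < j.+1) nth 0%N p k * m ^ k)%N = n.
  by apply/eqP; rewrite eq_sym -eqz_nat -subr_eq0 -beta0 // beta_p.
have p_neq0 : p != 0.
  apply: contraTneq n_gt0 => p0; rewrite -sum_p p0 polyseq0 big1 // => k _.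
  by rewrite nth_nil.
exists p.
  rewrite /is_mary_partition (sum_nth_expn_widen _ _ _ size_p) sum_p eqxx andbT.
  by rewrite -size_eq0 size_poly_eq0 p_neq0 lt0n -nth_last lead_coef_eq0.
have : 0 :: phi m n j p = 0 :: b.
  apply: (eq_from_nth (x0 := 0)) => [|t]; first by rewrite /= size_map size_iota size_b.
  rewrite /= size_map size_iota ltnS => le_tj.
  by rewrite nth_cons0_phi ?beta_p ?leqW.
by case.
Qed.

End Beta.

Theorem theorem2p2 (m n j : nat) :
  2 <= m -> 0 < n -> m ^ j <= n < m ^ j.+1 ->
  (* phi maps B_m(n) into S_m(n) *)
  (forall lam, is_mary_partition m n lam -> in_S m n j (phi m n j lam)) /\
  (* phi is injective on B_m(n) *)
  (forall lam1 lam2, is_mary_partition m n lam1 -> is_mary_partition m n lam2 ->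
     phi m n j lam1 = phi m n j lam2 -> lam1 = lam2) /\
  (* phi is onto S_m(n) *)
  (forall b, in_S m n j b -> exists2 lam, is_mary_partition m n lam & phi m n j lam = b).
Proof.
move=> m_gt1 n_gt0 /andP [_ lt_n_mj].
by split; [|split]; [apply: phi_in_S | apply: phi_inj | apply: phi_onto].
Qed.
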